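(* Consider a translation-invariant, nearest-neighbor, frustration free quantum spin chain as described in the context, and let $m,n\ge1$. The Hermitian operator $K(-m,n)=G(-m,0)\,G(0,n)\,G(-m,0)$ (acting on $\mathcal{H}_{[-m,n]}$) has range contained in $\mathcal{G}(-m,0)\otimes\mathcal{G}(1,n)$; its eigenspace for eigenvalue $1$ is exactly $\mathcal{G}(-m,n)$; and $\varepsilon(m,n)$ equals the largest eigenvalue of $K(-m,n)$ that is less than $1$.
   Context: For each $x\in\mathbb{Z}$, $\mathcal{H}_x=\mathbb{C}^d$, $\mathcal{H}_\Lambda=\bigotimes_{x\in\Lambda}\mathcal{H}_x$. A fixed positive operator $h$ on $\mathbb{C}^d\otimes\mathbb{C}^d$ gives $h(x,x+1)$ on sites $x,x+1$; $H(c,d)=\sum_{x=c}^{d-1}h(x,x+1)$ for $c\le d$ (extended by the identity to larger intervals, $H(c,c)=0$). Frustration free: $\mathcal{G}(c,d):=\operatorname{Ker}H(c,d)\ne\{0\}$ for every interval $[c,d]$; here $\mathcal{G}(c,d)$ for the interval $[c,d]$ is regarded as a subspace of $\mathcal{H}_{[c,d]}$ when written in tensor products, and $G(c,d)$ is the orthogonal projection onto $\operatorname{Ker}H(c,d)$ (with $G(c,c)=1$). $\varepsilon(m,n)=\sup\{\langle\psi,G(0,n)\psi\rangle:\psi\in\mathcal{G}(-m,0),\ \psi\perp\mathcal{G}(-m,n),\ \|\psi\|=1\}$, computed in $\mathcal{H}_{[-m,n]}$. *)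

From HB Require Import structures.
From mathcomp Require Import all_boot all_order all_algebra.
From mathcomp Require Import classical_sets reals.
From mathcomp.real_closed Require Import complex mxtens.

Unset Strict Implicit.
Unset Printing Implicit Defensive.

Import Order.TTheory GRing.Theory Num.Theory.
Local Open Scope ring_scope.

(* Conventions:
   - scalars: C = R[i] with R : realType (a model of the complex numbers);
   - the chain on L consecutive sites has Hilbert space C^(d^L), tensor
     products are Kronecker products [tensmx] (mathcomp real_closed/mxtens);
   - vectors are row vectors, an operator A acts by  v |-> v *m A
     (mathcomp's row convention, so kernels are [kermx], ranges are row
     spaces, eigenspaces are [eigenspace]);
   - inner product: [dotmx u v = (u *m v^t* ) 0 0] (spectral.v). *)

Section Chain.
Variable R : realType.
Local Notation C := (R[i]).
Variable d : nat.
Variable h : 'M[C]_(d ^ 2).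

(* A placed on k consecutive sites with a sites to its left and b to its right,
   inside a chain of N = a + k + b sites (identity elsewhere).  [conform_mx]
   only performs the dimension cast d^a * d^k * d^b = d^N; in every use below
   a + k + b = N holds, so it is exactly  1 (x) A (x) 1. *)
Definition embed (a k b N : nat) (A : 'M[C]_(d ^ k)) : 'M[C]_(d ^ N) :=
  conform_mx 0 ((1%:M : 'M[C]_(d ^ a)) *t A *t (1%:M : 'M[C]_(d ^ b))).

(* H on an interval of L sites (translation invariance: it only depends on L),
   sites numbered 0..L-1:  sum_{x=0}^{L-2} h(x,x+1). *)
Definition Ham (L : nat) : 'M[C]_(d ^ L) :=
  \sum_(x < L.-1) embed x 2 (L - x - 2) L h.

Definition Gspace (L : nat) : 'M[C]_(d ^ L) := kermx (Ham L).

Definition Gproj (L : nat) : 'M[C]_(d ^ L) := proj_ortho (Gspace L).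

Definition tens_sp (a b N : nat) (S : 'M[C]_(d ^ a)) (T : 'M[C]_(d ^ b))
  : 'M[C]_(d ^ N) := conform_mx 0 (S *t T).

(* Interval [-m, n] has m + n + 1 sites; site -m is numbered 0, site 0 is m. *)
Definition G_left (m n : nat) : 'M[C]_(d ^ (m + n + 1)) :=
  embed 0 m.+1 n (m + n + 1) (Gproj m.+1).
Definition G_right (m n : nat) : 'M[C]_(d ^ (m + n + 1)) :=
  embed m n.+1 0 (m + n + 1) (Gproj n.+1).

Definition Kop (m n : nat) : 'M[C]_(d ^ (m + n + 1)) :=
  G_left m n *m G_right m n *m G_left m n.

(* epsilon(m,n) = sup { <psi, G(0,n) psi> : psi in G(-m,0) (i.e. in the kernel
   of H(-m,0) computed in H_[-m,n]), psi orthogonal to G(-m,n), ||psi|| = 1 }. *)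
Definition eps (m n : nat) : R :=
  sup [set x : R | exists psi : 'rV[C]_(d ^ (m + n + 1)),
         [/\ psi *m embed 0 m.+1 n (m + n + 1) (Ham m.+1) = 0,
             (forall phi : 'rV[C]_(d ^ (m + n + 1)),
                 (phi <= Gspace (m + n + 1))%MS -> dotmx psi phi = 0),
             dotmx psi psi = 1
           & (x%:C)%C = dotmx (psi *m G_right m n) psi]].

End Chain.

Arguments embed {R d} a k b N A.
Arguments Ham {R d} h L.
Arguments Gspace {R d} h L.
Arguments Gproj {R d} h L.
Arguments tens_sp {R d a b} N S T.
Arguments G_left {R d} h m n.
Arguments G_right {R d} h m n.
Arguments Kop {R d} h m n.
Arguments eps {R d} h m n.

Definition positive_op {R : realType} {N : nat} (A : 'M[R[i]]_N) : Prop :=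
  forall v : 'rV[R[i]]_N, 0 <= dotmx (v *m A) v.

(* Frustration freeness: Ker H(c,d) <> {0} for every interval [c,d], c <= d,
   i.e. for every number L >= 1 of sites. *)
Definition frustration_free {R : realType} {d : nat} (h : 'M[R[i]]_(d ^ 2))
  : Prop := forall L : nat, (0 < L)%N -> Gspace h L != 0.

Definition largest_eig_below1 {R : realType} {N : nat} (A : 'M[R[i]]_N)
  (lam : R[i]) : Prop :=
  [/\ eigenvalue A lam, lam < 1 &
      forall mu : R[i], eigenvalue A mu -> mu < 1 -> mu <= lam].

(* Write P = G(-m,0) and Q = G(0,n), viewed as orthogonal projections on H_[-m,n], so that
   K = PQP.  Since h >= 0, a vector is annihilated by a sum of translates of h iff it is
   annihilated by each of them; hence v is fixed by P and by Q iff v lies in G(-m,n).  As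
   <v, Kv> = |QPv|^2 <= |Pv|^2 <= |v|^2, with equality iff Pv = Qv = v, the 1-eigenspace
   of K is G(-m,n).  The range statement comes from Q (1 (x) G(1,n)) = Q, because H(0,n)
   contains H(1,n), and from P (1 (x) G(1,n)) = G(-m,0) (x) G(1,n).  Finally, for psi in
   the range of P we have <psi, Q psi> = <psi, K psi>; if moreover psi is orthogonal to
   the 1-eigenspace of K, the spectral theorem bounds this by the largest eigenvalue
   below 1, and a normalised eigenvector for that eigenvalue attains the bound. *)

From HB Require Import structures.
From mathcomp Require Import all_boot all_order all_algebra.
From mathcomp Require Import classical_sets reals.
From mathcomp.real_closed Require Import complex mxtens.
From mathcomp Require Import zify ring boolp.

Set Implicit Arguments.
Unset Strict Implicit.
Unset Printing Implicit Defensive.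

Import Order.TTheory GRing.Theory Num.Theory.
Local Open Scope ring_scope.

Section ConformMx.
Variable R : pzRingType.

Lemma castmx_conform p q p' q' (e : (p = p') * (q = q')) (A : 'M[R]_(p, q)) :
  castmx e A = conform_mx 0 A.
Proof. by rewrite -(conform_mx_id 0 (castmx e A)) conform_castmx. Qed.

Lemma conform_mxM p q r p' q' r' (A : 'M[R]_(p, q)) (B : 'M[R]_(q, r)) :
  p = p' -> q = q' -> r = r' ->
  conform_mx (0 : 'M_(p', r')) (A *m B) =
  conform_mx (0 : 'M_(p', q')) A *m conform_mx (0 : 'M_(q', r')) B.
Proof. by move=> e1 e2 e3; subst; rewrite !conform_mx_id. Qed.

Lemma conform_mxD p q p' q' (A B : 'M[R]_(p, q)) : p = p' -> q = q' ->
  conform_mx (0 : 'M_(p', q')) (A + B) = conform_mx 0 A + conform_mx 0 B.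
Proof. by move=> e1 e2; subst; rewrite !conform_mx_id. Qed.

Lemma conform_mxN p q p' q' (A : 'M[R]_(p, q)) : p = p' -> q = q' ->
  conform_mx (0 : 'M_(p', q')) (- A) = - conform_mx 0 A.
Proof. by move=> e1 e2; subst; rewrite !conform_mx_id. Qed.

Lemma conform_mx_sum p q p' q' k (F : 'I_k -> 'M[R]_(p, q)) : p = p' -> q = q' ->
  conform_mx (0 : 'M_(p', q')) (\sum_(i < k) F i) =
  \sum_(i < k) conform_mx 0 (F i).
Proof.
by move=> e1 e2; subst; rewrite conform_mx_id; apply: eq_bigr => i _; rewrite conform_mx_id.
Qed.

Lemma conform_mx_conform p q p' q' p'' q'' (A : 'M[R]_(p, q)) : p = p' -> q = q' ->
  conform_mx (0 : 'M_(p'', q'')) (conform_mx (0 : 'M_(p', q')) A) = conform_mx 0 A.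
Proof. by move=> e1 e2; subst; rewrite conform_mx_id. Qed.

Lemma conform_mx1 p p' : p = p' -> conform_mx (0 : 'M[R]_p') (1%:M : 'M_p) = 1%:M.
Proof. by move=> e; subst; rewrite conform_mx_id. Qed.

Lemma conform_mx0 p q p' q' : conform_mx (0 : 'M[R]_(p', q')) (0 : 'M_(p, q)) = 0.
Proof.
have [e|ne] := eqVneq p p'; last by rewrite nonconform_mx ?ne.
have [f|nf] := eqVneq q q'; last by rewrite nonconform_mx ?nf ?orbT.
by subst; rewrite conform_mx_id.
Qed.

Lemma conform_mx_eq0 p q p' q' (A : 'M[R]_(p, q)) : p = p' -> q = q' ->
  conform_mx (0 : 'M_(p', q')) A = 0 -> A = 0.
Proof. by move=> e1 e2; subst; rewrite conform_mx_id. Qed.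

Lemma trmx_conform p q p' q' (A : 'M[R]_(p, q)) : p = p' -> q = q' ->
  (conform_mx (0 : 'M_(p', q')) A)^T = conform_mx 0 A^T.
Proof. by move=> e1 e2; subst; rewrite !conform_mx_id. Qed.

Lemma map_conform_mx (f : R -> R) p q p' q' (A : 'M[R]_(p, q)) : p = p' -> q = q' ->
  map_mx f (conform_mx (0 : 'M_(p', q')) A) = conform_mx 0 (map_mx f A).
Proof. by move=> e1 e2; subst; rewrite !conform_mx_id. Qed.

End ConformMx.

Lemma conform_submx (F : fieldType) p q p' q' (A B : 'M[F]_(p, q)) :
  p = p' -> q = q' -> (A <= B)%MS ->
  (conform_mx (0 : 'M_(p', q')) A <= conform_mx (0 : 'M_(p', q')) B)%MS.
Proof. by move=> e1 e2; subst; rewrite !conform_mx_id. Qed.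

Section TensorProduct.
Variable R : comPzRingType.

Lemma tensmx_conforml p q p' q' r s (A : 'M[R]_(p, q)) (B : 'M[R]_(r, s)) :
  p = p' -> q = q' ->
  conform_mx (0 : 'M_(p', q')) A *t B = conform_mx (0 : 'M_(p' * r, q' * s)) (A *t B).
Proof. by move=> e1 e2; subst; rewrite !conform_mx_id. Qed.

Lemma tensmx_conformr p q p' q' r s (A : 'M[R]_(p, q)) (B : 'M[R]_(r, s)) :
  p = p' -> q = q' ->
  B *t conform_mx (0 : 'M_(p', q')) A = conform_mx (0 : 'M_(r * p', s * q')) (B *t A).
Proof. by move=> e1 e2; subst; rewrite !conform_mx_id. Qed.

Lemma tens1mx p q : (1%:M : 'M[R]_p) *t (1%:M : 'M[R]_q) = 1%:M.
Proof.
apply/matrixP => i j.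
case: (mxtens_indexP i) => i1 i2; case: (mxtens_indexP j) => j1 j2.
rewrite tensmxE !mxE (can_eq (@mxtens_indexK _ _)) xpair_eqE.
by case: (i1 == j1); case: (i2 == j2); rewrite ?mulr1 ?mul0r ?mulr0.
Qed.

Lemma tensmxDl m n p q (A B : 'M[R]_(m, n)) (C : 'M[R]_(p, q)) :
  (A + B) *t C = A *t C + B *t C.
Proof. by apply/matrixP => i j; rewrite !mxE mulrDl. Qed.

Lemma tensmxDr m n p q (A : 'M[R]_(m, n)) (B C : 'M[R]_(p, q)) :
  A *t (B + C) = A *t B + A *t C.
Proof. by apply/matrixP => i j; rewrite !mxE mulrDr. Qed.

Lemma tensmxNl m n p q (A : 'M[R]_(m, n)) (C : 'M[R]_(p, q)) : (- A) *t C = - (A *t C).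
Proof. by apply/matrixP => i j; rewrite !mxE mulNr. Qed.

Lemma tensmxNr m n p q (A : 'M[R]_(m, n)) (C : 'M[R]_(p, q)) : A *t (- C) = - (A *t C).
Proof. by apply/matrixP => i j; rewrite !mxE mulrN. Qed.

Lemma tensmx_suml m n p q k (F : 'I_k -> 'M[R]_(m, n)) (C : 'M[R]_(p, q)) :
  (\sum_(i < k) F i) *t C = \sum_(i < k) F i *t C.
Proof. by elim/big_ind2: _ => [|x1 x2 y1 y2 <- <-|//]; rewrite ?tens0mx ?tensmxDl. Qed.

Lemma tensmx_sumr m n p q k (F : 'I_k -> 'M[R]_(m, n)) (C : 'M[R]_(p, q)) :
  C *t (\sum_(i < k) F i) = \sum_(i < k) C *t F i.
Proof. by elim/big_ind2: _ => [|x1 x2 y1 y2 <- <-|//]; rewrite ?tensmx0 ?tensmxDr. Qed.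

Lemma tensmxA m1 n1 m2 n2 m3 n3 (A : 'M[R]_(m1, n1)) (B : 'M[R]_(m2, n2))
    (C : 'M[R]_(m3, n3)) :
  A *t (B *t C) = castmx (esym (mulnA _ _ _), esym (mulnA _ _ _)) ((A *t B) *t C).
Proof.
apply/matrixP => i j.
case: (mxtens_indexP i) => i1 i23; case: (mxtens_indexP i23) => i2 i3.
case: (mxtens_indexP j) => j1 j23; case: (mxtens_indexP j23) => j2 j3.
rewrite !tensmxE castmxE /=.
have castE p1 p2 p3 (k1 : 'I_p1) (k2 : 'I_p2) (k3 : 'I_p3) :
    cast_ord (mulnA p1 p2 p3) (mxtens_index (k1, mxtens_index (k2, k3))) =
    mxtens_index (mxtens_index (k1, k2), k3).
  by apply: val_inj => /=; rewrite mulnDl -mulnA addnA.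
by rewrite !esymK !castE !tensmxE mulrA.
Qed.

End TensorProduct.

Lemma tensmx_submx (F : fieldType) m1 m2 n1 p1 p2 n2 (A : 'M[F]_(m1, n1))
    (S : 'M[F]_(p1, n1)) (B : 'M[F]_(m2, n2)) (T : 'M[F]_(p2, n2)) :
  (A <= S)%MS -> (B <= T)%MS -> (A *t B <= S *t T)%MS.
Proof.
move=> sAS sBT; rewrite -(mulmxKpV sAS) -(mulmxKpV sBT) -tensmx_mul.
exact: submxMl.
Qed.

Section TensorAdjoint.
Variable C : numClosedFieldType.
Local Open Scope sesquilinear_scope.

Lemma trmxC_tens m n p q (A : 'M[C]_(m, n)) (B : 'M[C]_(p, q)) :
  (A *t B)^t* = A^t* *t B^t*.
Proof. by rewrite trmx_tens map_mxT. Qed.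

End TensorAdjoint.

Ltac expn_dims :=
  match goal with |- @eq nat _ _ =>
    rewrite -?expnD; first [reflexivity | congr (expn _ _); lia] end.

Section Embedding.
Variables (R : realType) (d : nat).
Local Notation C := R[i].
Local Open Scope sesquilinear_scope.
Implicit Types (a k b N : nat).

Lemma embedM a k b N (X Y : 'M[C]_(d ^ k)) : (a + k + b = N)%N ->
  embed a k b N (X *m Y) = embed a k b N X *m embed a k b N Y.
Proof. by move=> e; rewrite /embed -conform_mxM ?tensmx_mul ?mulmx1 //; expn_dims. Qed.

Lemma embedD a k b N (X Y : 'M[C]_(d ^ k)) : (a + k + b = N)%N ->
  embed a k b N (X + Y) = embed a k b N X + embed a k b N Y.
Proof. by move=> e; rewrite /embed tensmxDr tensmxDl conform_mxD //; expn_dims. Qed.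

Lemma embedN a k b N (X : 'M[C]_(d ^ k)) : (a + k + b = N)%N ->
  embed a k b N (- X) = - embed a k b N X.
Proof. by move=> e; rewrite /embed tensmxNr tensmxNl conform_mxN //; expn_dims. Qed.

Lemma embedB a k b N (X Y : 'M[C]_(d ^ k)) : (a + k + b = N)%N ->
  embed a k b N (X - Y) = embed a k b N X - embed a k b N Y.
Proof. by move=> e; rewrite embedD // embedN. Qed.

Lemma embed_sum a k b N n (F : 'I_n -> 'M[C]_(d ^ k)) : (a + k + b = N)%N ->
  embed a k b N (\sum_(i < n) F i) = \sum_(i < n) embed a k b N (F i).
Proof. by move=> e; rewrite /embed tensmx_sumr tensmx_suml conform_mx_sum //; expn_dims. Qed.

Lemma embed1 a k b N : (a + k + b = N)%N -> embed a k b N (1%:M : 'M[C]_(d ^ k)) = 1%:M.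
Proof. by move=> e; rewrite /embed !tens1mx conform_mx1 //; expn_dims. Qed.

Lemma embed0 a k b N : embed a k b N (0 : 'M[C]_(d ^ k)) = 0.
Proof. by rewrite /embed tensmx0 tens0mx conform_mx0. Qed.

Lemma embed_trmxC a k b N (X : 'M[C]_(d ^ k)) : (a + k + b = N)%N ->
  embed a k b N (X^t* ) = (embed a k b N X)^t*.
Proof.
move=> e; rewrite /embed trmx_conform ?map_conform_mx; try expn_dims.
by rewrite !trmxC_tens !trmx1 !map_mx1.
Qed.

Lemma embed_embed a k b N x j y (X : 'M[C]_(d ^ j)) :
  (a + k + b = N)%N -> (x + j + y = k)%N ->
  embed a k b N (embed x j y k X) = embed (a + x) j (y + b) N X.
Proof.
move=> e1 e2; rewrite /embed.
have split1 p q : (1%:M : 'M[C]_(d ^ (p + q))) =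
    conform_mx 0 ((1%:M : 'M[C]_(d ^ p)) *t (1%:M : 'M[C]_(d ^ q))).
  by rewrite tens1mx conform_mx1 //; expn_dims.
rewrite (split1 a x) (split1 y b).
rewrite ?(tensmx_conforml, tensmx_conformr, conform_mx_conform); try expn_dims.
rewrite !tensmxA !castmx_conform.
by rewrite ?(tensmx_conforml, tensmx_conformr, conform_mx_conform); try expn_dims.
Qed.

Lemma embed_eq0 a k b N (X : 'M[C]_(d ^ k)) : (0 < d)%N -> (a + k + b = N)%N ->
  embed a k b N X = 0 -> X = 0.
Proof.
move=> d_gt0 e /conform_mx_eq0 X0.
have {}X0 : (1%:M : 'M[C]_(d ^ a)) *t X *t (1%:M : 'M[C]_(d ^ b)) = 0.
  by apply: X0; expn_dims.
have da : (0 < d ^ a)%N by rewrite expn_gt0 d_gt0.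
have db : (0 < d ^ b)%N by rewrite expn_gt0 d_gt0.
apply/matrixP => i j; rewrite mxE.
move/matrixP: X0 => /(_ (mxtens_index (mxtens_index (Ordinal da, i), Ordinal db))
    (mxtens_index (mxtens_index (Ordinal da, j), Ordinal db))).
by rewrite !tensmxE !mxE !eqxx !mulr1 mul1r.
Qed.

Lemma embed0l k b N (X : 'M[C]_(d ^ k)) : (k + b = N)%N ->
  embed 0 k b N X = conform_mx 0 (X *t (1%:M : 'M[C]_(d ^ b))).
Proof.
move=> e; rewrite /embed tens_scalar1mx castmx_conform.
by rewrite ?(tensmx_conforml, conform_mx_conform); try expn_dims.
Qed.

Lemma embed0r a k N (X : 'M[C]_(d ^ k)) : (a + k = N)%N ->
  embed a k 0 N X = conform_mx 0 ((1%:M : 'M[C]_(d ^ a)) *t X).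
Proof.
move=> e; rewrite /embed tens_mx_scalar scale1r castmx_conform.
by rewrite ?(tensmx_conforml, tensmx_conformr, conform_mx_conform); try expn_dims.
Qed.

End Embedding.

Section SelfAdjoint.
Variable C : numClosedFieldType.
Local Open Scope sesquilinear_scope.

Lemma trmxC_mul m n p (A : 'M[C]_(m, n)) (B : 'M[C]_(n, p)) :
  (A *m B)^t* = B^t* *m A^t*.
Proof. by rewrite trmx_mul map_mxM. Qed.

Lemma dotmx_mulmxl n (u v : 'rV[C]_n) (A : 'M[C]_n) :
  dotmx (u *m A) v = dotmx u (v *m A^t*).
Proof. by rewrite !dotmxE trmxC_mul trmxCK mulmxA. Qed.

Lemma dotmxC n (u v : 'rV[C]_n) : dotmx u v = (dotmx v u)^*.
Proof. by rewrite hermC /= mul1r. Qed.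

Lemma dotmx_ext n (A B : 'M[C]_n) :
  (forall u v : 'rV_n, dotmx (u *m A) v = dotmx (u *m B) v) -> A = B.
Proof.
move=> AB; apply/row_matrixP => i; rewrite !rowE; apply/eqP.
by rewrite -subr_eq0 -(dnorm_eq0 (@dotmx C n)) linearBl /= AB subrr.
Qed.

Definition selfadjoint n (A : 'M[C]_n) := A^t* = A.

Definition psdmx n (A : 'M[C]_n) := forall v : 'rV_n, 0 <= dotmx (v *m A) v.

Lemma selfadjoint_dotmx n (A : 'M[C]_n) (u v : 'rV_n) : selfadjoint A ->
  dotmx (u *m A) v = dotmx u (v *m A).
Proof. by rewrite dotmx_mulmxl => ->. Qed.

Lemma psdmx_selfadjoint n (A : 'M[C]_n) : psdmx A -> selfadjoint A.
Proof.
move=> psdA; pose f u v := dotmx (u *m A) v.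
have f_real v : (f v v)^* = f v v by apply/conj_Creal/ger0_real/psdA.
have fDZ u v c : f (u + c *: v) (u + c *: v) =
    f u u + c^* * f u v + c * f v u + c * c^* * f v v.
  rewrite /f mulmxDl -scalemxAl linearDl /= !linearDr /=.
  rewrite !linearZl_LR /= !linearZr_LR /=; ring.
have fC u v : (f u v)^* = f v u.
  (* f is real on u + v and on u + 'i v; comparing imaginary parts forces b = a^* *)
  set a := f u v; set b := f v u.
  have := f_real (u + 1 *: v); have := f_real (u + 'i *: v).
  rewrite !fDZ conjC1 conjCi -/a -/b !(rmorphD, rmorphM, rmorphN) /=.
  rewrite conjC1 conjCi opprK !f_real.
  move=> /eqP; rewrite -subr_eq0 => /eqP Ei /eqP; rewrite -subr_eq0 => /eqP E1.
  have := congr2 (fun p q => 'i * p + q) E1 Ei; rewrite mulr0 addr0.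
  rewrite [X in X = _](_ : _ = 2%:R * 'i * (a^* - b)); last by ring.
  by move/eqP; rewrite !mulf_eq0 pnatr_eq0 (negbTE (neq0Ci C)) subr_eq0 => /eqP.
apply: dotmx_ext => u v.
by rewrite dotmx_mulmxl trmxCK [LHS]dotmxC; apply: fC.
Qed.

Lemma row_unitary_neq0 m n (M : 'M[C]_(m, n)) k : M \is unitarymx -> row k M != 0.
Proof.
move=> /row_unitarymxP /(_ k k); rewrite eqxx => Mkk; apply/eqP => Mk0.
by move: Mkk; rewrite Mk0 linear0l => /eqP; rewrite eq_sym oner_eq0.
Qed.

Lemma selfadjoint_eigen_real n (A : 'M[C]_n) (v : 'rV_n) mu :
  selfadjoint A -> v != 0 -> v *m A = mu *: v -> mu \is Num.real.
Proof.
move=> sA v_neq0 vA; rewrite CrealE; apply/eqP.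
have vv_neq0 : dotmx v v != 0 by rewrite dnorm_eq0.
have := selfadjoint_dotmx v v sA; rewrite vA linearZl_LR linearZr_LR /=.
by move=> /(mulIf vv_neq0).
Qed.

Section SpectralDecomposition.
Variables (n : nat) (A : 'M[C]_n).
Hypothesis sA : selfadjoint A.
Local Notation U := (spectralmx A).
Local Notation D := (spectral_diag A).

Lemma selfadjoint_spectralE : A = U^t* *m diag_mx D *m U.
Proof.
have nA : A \is normalmx by apply/normalmxP; rewrite sA.
by rewrite {1}(orthomx_spectralP nA) invmx_unitary ?spectral_unitarymx.
Qed.

Lemma spectral_row_eigen k : row k U *m A = D 0 k *: row k U.
Proof.
rewrite [X in _ *m X = _]selfadjoint_spectralE !mulmxA rowE -(mulmxA _ U).
rewrite (unitarymxP (spectral_unitarymx A)) mulmx1 -rowE row_diag_mx.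
by rewrite -scalemxAl -rowE.
Qed.

Lemma eigenvalue_spectral_diag k : eigenvalue A (D 0 k).
Proof.
apply/eigenvalueP; exists (row k U); first exact: spectral_row_eigen.
exact/row_unitary_neq0/spectral_unitarymx.
Qed.

Lemma spectral_diag_real k : D 0 k \is Num.real.
Proof.
apply: (selfadjoint_eigen_real sA _ (spectral_row_eigen k)).
exact/row_unitary_neq0/spectral_unitarymx.
Qed.

Lemma eigenvalue_spectral_diagP mu : eigenvalue A mu -> exists k, mu = D 0 k.
Proof.
move=> /eigenvalueP [v vA v_neq0].
have UU : U^t* *m U = 1%:M by apply/mulmx1C/unitarymxP/spectral_unitarymx.
have w_neq0 : v *m U^t* != 0.
  by apply: contraNneq v_neq0 => w0; rewrite -[v]mulmx1 -UU mulmxA w0 mul0mx.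
have wD : v *m U^t* *m diag_mx D = mu *: (v *m U^t*).
  rewrite scalemxAl -vA [X in _ = _ *m X *m _]selfadjoint_spectralE !mulmxA.
  by rewrite mulmxtVK ?spectral_unitarymx.
have [k /= wk_neq0|w0] := pickP (fun k => (v *m U^t*) 0 k != 0); last first.
  by case/eqP: w_neq0; apply/rowP => k; move/negbFE/eqP: (w0 k) => ->; rewrite mxE.
exists k; apply: (mulIf wk_neq0).
by have /rowP /(_ k) := wD; rewrite mul_mx_diag !mxE mulrC.
Qed.

Lemma dotmx_le_eigen (psi : 'rV_n) lam :
  (forall (r : 'rV_n) mu, r != 0 -> r *m A = mu *: r -> dotmx psi r != 0 -> mu <= lam) ->
  dotmx (psi *m A) psi <= lam * dotmx psi psi.
Proof.
move=> lam_max; pose w := psi *m U^t*.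
have UU : U^t* *m U = 1%:M by apply/mulmx1C/unitarymxP/spectral_unitarymx.
have -> : dotmx psi psi = dotmx w w by rewrite dotmx_mulmxl trmxCK -mulmxA UU mulmx1.
have -> : dotmx (psi *m A) psi = dotmx (w *m diag_mx D) w.
  by rewrite [X in psi *m X]selfadjoint_spectralE !mulmxA dotmx_mulmxl.
have wk k : w 0 k = dotmx psi (row k U).
  by rewrite dotmxE !mxE; apply: eq_bigr => j _; rewrite !mxE.
clearbody w; rewrite mul_mx_diag !dotmxE !mxE mulr_sumr; apply: ler_sum => k _; rewrite !mxE.
have [->|wk_neq0] := eqVneq (w 0 k) 0; first by rewrite !mul0r mulr0.
rewrite mulrAC [lam * _]mulrC ler_wpM2l ?mul_conjC_ge0 //.
apply: lam_max (spectral_row_eigen k) _; last by rewrite -wk.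
exact/row_unitary_neq0/spectral_unitarymx.
Qed.

End SpectralDecomposition.

Lemma psdmx_gram n (A : 'M[C]_n) : psdmx A -> exists Y : 'M[C]_n, A = Y^t* *m Y.
Proof.
move=> psdA; have sA := psdmx_selfadjoint psdA.
set U := spectralmx A; set D := spectral_diag A.
have D_ge0 k : 0 <= D 0 k.
  have := psdA (row k U); rewrite spectral_row_eigen // linearZl_LR /=.
  by have /row_unitarymxP -> := spectral_unitarymx A; rewrite eqxx mulr1.
pose S := diag_mx (\row_k sqrtC (D 0 k)).
have SS : S^t* = S.
  apply/matrixP => i j; rewrite !mxE; have [->|_] := eqVneq i j; last by rewrite conjC0.
  by rewrite !mulr1n (conj_Creal (sqrtC_real (D_ge0 j))).
exists (S *m U); rewrite trmxC_mul SS -mulmxA (mulmxA S) mulmx_diag mulmxA.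
rewrite {1}(selfadjoint_spectralE sA); congr (_ *m diag_mx _ *m _).
by apply/rowP => k; rewrite !mxE -expr2 sqrtCK.
Qed.

Lemma psdmx_dotmx_eq0 n (A : 'M[C]_n) (v : 'rV_n) : psdmx A ->
  dotmx (v *m A) v = 0 -> v *m A = 0.
Proof.
move=> /psdmx_gram [Y ->]; rewrite mulmxA dotmx_mulmxl.
by move/eqP; rewrite dnorm_eq0 => /eqP ->; rewrite mul0mx.
Qed.

Lemma psdmx_sum n k (F : 'I_k -> 'M[C]_n) :
  (forall i, psdmx (F i)) -> psdmx (\sum_(i < k) F i).
Proof.
by move=> psdF v; rewrite mulmx_sumr linear_sumlz /=; apply: sumr_ge0 => i _; apply: psdF.
Qed.

Lemma psdmx_sum_ker n k (F : 'I_k -> 'M[C]_n) (v : 'rV_n) :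
  (forall i, psdmx (F i)) ->
  v *m (\sum_(i < k) F i) = 0 <-> forall i, v *m F i = 0.
Proof.
move=> psdF; split=> [vF0 i|vF0]; last by rewrite mulmx_sumr big1.
apply: psdmx_dotmx_eq0 => //; move: i isT; apply: psumr_eq0P => [j _|]; first exact: psdF.
by rewrite -linear_sumlz /= -mulmx_sumr vF0 linear0l.
Qed.

Lemma real_seq_max (s : seq C) x0 : {subset s <= Num.real} -> x0 \in s ->
  exists2 x, x \in s & forall y, y \in s -> y <= x.
Proof.
elim: s x0 => // a [|b s] IH x0 s_real _.
  by exists a => [|y]; rewrite ?mem_seq1 // => /eqP ->.
have sub_s : {subset b :: s <= a :: b :: s} := @mem_behead _ (a :: b :: s).
have [x xs xmax] := IH b (fun y ys => s_real y (sub_s y ys)) (mem_head b s).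
have [ra rx] := (s_real a (mem_head _ _), s_real x (sub_s x xs)).
case/orP: (real_leVge ra rx) => [ax|xa].
  exists x => [|y]; first exact: sub_s.
  by rewrite inE => /predU1P [->|/xmax].
exists a => [|y]; first exact: mem_head.
by rewrite inE => /predU1P [->|/xmax yx]; last exact: le_trans yx xa.
Qed.

Lemma selfadjoint_max_eigenvalue_lt n (A : 'M[C]_n) t : selfadjoint A ->
  (exists2 mu, eigenvalue A mu & mu < t) ->
  exists lam, [/\ eigenvalue A lam, lam < t &
                  forall mu, eigenvalue A mu -> mu < t -> mu <= lam].
Proof.
move=> sA [mu0 /(eigenvalue_spectral_diagP sA) [k0 ->] k0t].
pose s := [seq spectral_diag A 0 k | k <- enum 'I_n & spectral_diag A 0 k < t].
have in_s k : spectral_diag A 0 k < t -> spectral_diag A 0 k \in s.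
  by move=> kt; rewrite map_f // mem_filter kt mem_enum.
have s_real : {subset s <= Num.real}.
  by move=> _ /mapP [k _ ->]; apply: spectral_diag_real.
have [_ /mapP [k + ->] lam_max] := real_seq_max s_real (in_s k0 k0t).
rewrite mem_filter => /andP [kt _].
exists (spectral_diag A 0 k); split; rewrite ?eigenvalue_spectral_diag //.
by move=> mu /(eigenvalue_spectral_diagP sA) [j ->] jt; apply/lam_max/in_s.
Qed.

Lemma dotmx_ortho_sub m n (U : 'M[C]_(m, n)) (x y : 'rV_n) :
  (x <= U)%MS -> y *m U^t* = 0 -> dotmx y x = 0.
Proof. by move=> xU yU; rewrite dotmxE -(mulmxKpV xU) trmxC_mul mulmxA yU mul0mx mxE. Qed.

Lemma proj_ortho_selfadjoint m n (U : 'M[C]_(m, n)) : selfadjoint (proj_ortho U).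
Proof.
set P := proj_ortho U.
have dotmx_proj u v : dotmx (u *m P) v = dotmx (u *m P) (v *m P).
  rewrite -[v in LHS](subrK (v *m P)) linearDr /= dotmxC.
  rewrite (dotmx_ortho_sub (proj_ortho_sub _ _)) ?conjC0 ?add0r //.
  exact/orthomx1P/proj_ortho_compl_sub.
apply/esym/dotmx_ext => u v.
by rewrite [RHS]dotmx_mulmxl trmxCK dotmx_proj [RHS]dotmxC [in RHS]dotmx_proj -dotmxC.
Qed.

Lemma mulmx_proj_kermx n (X : 'M[C]_n) : proj_ortho (kermx X) *m X = 0.
Proof. by apply/sub_kermxP; rewrite -[proj_ortho _]mul1mx proj_ortho_sub. Qed.

Lemma proj_kermx_compl n (X : 'M[C]_n) : selfadjoint X ->
  exists Z, 1%:M - proj_ortho (kermx X) = X *m Z.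
Proof.
move=> sX; set Y := 1%:M - proj_ortho (kermx X).
pose O := orthomx Num.Def.conjC (hermitian1mx n) (kermx X).
have sYO : (Y <= O)%MS.
  by have := proj_ortho_compl_sub (kermx X) (1%:M : 'M[C]_n); rewrite mul1mx.
have sXO : (X <= O)%MS.
  by apply/orthomx1P; rewrite -{1}sX -trmxC_mul (sub_kermxP (submx_refl _)) trmx0 map_mx0.
(* (ker X)^perp is the row space of X: it contains it, and both have rank \rank X *)
have sOX : (O <= X)%MS.
  have [_ <-] := mxrank_leqif_sup sXO.
  by rewrite rank_ortho mxrank_ker subKn ?rank_leq_col.
have sY : Y^t* = Y.
  by rewrite /Y linearB /= map_mxB trmx1 map_mx1 proj_ortho_selfadjoint.
exists ((Y *m pinvmx X)^t* ).
by rewrite -{1}sY -{1}(mulmxKpV (submx_trans sYO sOX)) trmxC_mul sX.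
Qed.

Lemma dotmx_proj_pythagoras n (P : 'M[C]_n) (v : 'rV_n) : selfadjoint P -> P *m P = P ->
  dotmx v v = dotmx (v *m P) (v *m P) + dotmx (v - v *m P) (v - v *m P).
Proof.
move=> sP iP; have vP_ortho : dotmx (v *m P) (v - v *m P) = 0.
  by rewrite selfadjoint_dotmx // mulmxBl -mulmxA iP subrr linear0r.
by rewrite -(hnormDd vP_ortho) (addrC (v *m P)) subrK.
Qed.

Section TwoProjections.
Variables (n : nat) (P Q : 'M[C]_n).
Hypotheses (sP : selfadjoint P) (sQ : selfadjoint Q) (iP : P *m P = P) (iQ : Q *m Q = Q).

Lemma PQP_selfadjoint : selfadjoint (P *m Q *m P).
Proof. by rewrite /selfadjoint !trmxC_mul sP sQ mulmxA. Qed.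

Lemma dotmx_PQP (v : 'rV_n) :
  dotmx (v *m (P *m Q *m P)) v = dotmx (v *m P *m Q) (v *m P *m Q).
Proof.
rewrite !mulmxA (selfadjoint_dotmx _ _ sP) -[in LHS]iQ mulmxA.
by rewrite (selfadjoint_dotmx _ _ sQ).
Qed.

Lemma dotmx_PQP_le (v : 'rV_n) : dotmx (v *m (P *m Q *m P)) v <= dotmx v v.
Proof.
rewrite dotmx_PQP (dotmx_proj_pythagoras v sP iP) (dotmx_proj_pythagoras (v *m P) sQ iQ).
by rewrite -addrA lerDl addr_ge0 ?dnorm_ge0.
Qed.

Lemma PQP_eigen_bounds (v : 'rV_n) mu :
  v != 0 -> v *m (P *m Q *m P) = mu *: v -> 0 <= mu <= 1.
Proof.
move=> v_neq0 vK; have vv_gt0 : 0 < dotmx v v by rewrite dnorm_gt0.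
have := dotmx_PQP_le v; rewrite vK linearZl_LR /= -[X in _ <= X]mul1r ler_pM2r // => ->.
have : 0 <= dotmx (v *m P *m Q) (v *m P *m Q) := dnorm_ge0 _ _.
by rewrite -dotmx_PQP vK linearZl_LR /= pmulr_lge0 // => ->.
Qed.

Lemma PQP_fixed (v : 'rV_n) : v *m (P *m Q *m P) = v <-> v *m P = v /\ v *m Q = v.
Proof.
split=> [vK|[vP vQ]]; last by rewrite !mulmxA vP vQ vP.
have := dotmx_proj_pythagoras v sP iP.
rewrite (dotmx_proj_pythagoras (v *m P) sQ iQ) -dotmx_PQP vK -addrA -[LHS]addr0.
move/addrI/esym/eqP; rewrite paddr_eq0 ?dnorm_ge0 // !dnorm_eq0 !subr_eq0.
by case/andP => /eqP vPQ /eqP vP; split; [rewrite -vP | rewrite {1}vP -vPQ -vP].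
Qed.

End TwoProjections.

End SelfAdjoint.

Section Supremum.
Variable R : realType.

Lemma sup_max (S : set R) a : (forall x, S x -> x <= a) -> S a -> sup S = a.
Proof.
move=> S_le Sa; apply/le_anti/andP; split; first by apply: ge_sup => //; exists a.
by apply: sup_upper_bound => //; split; [exists a | exists a].
Qed.

Lemma sup_eq0 (S : set R) : (forall x, S x -> x = 0) -> sup S = 0.
Proof.
move=> S0; have [[x Sx]|/forallNP S_empty] := pselect (exists x, S x).
  by apply: sup_max => [y /S0 ->|]; rewrite -(S0 x Sx).
by rewrite (_ : S = set0) ?sup0 //; apply/seteqP; split => y // /S_empty.
Qed.

End Supremum.

Section ChainHamiltonian.
Variables (R : realType) (d : nat) (h : 'M[R[i]]_(d ^ 2)).
Local Notation C := R[i].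
Hypothesis h_psd : psdmx h.
Local Open Scope sesquilinear_scope.

Lemma embed_psdmx a k b N (X : 'M[C]_(d ^ k)) : (a + k + b = N)%N ->
  psdmx X -> psdmx (embed a k b N X).
Proof.
move=> e /psdmx_gram [Y ->] v.
by rewrite (embedM _ _ e) (embed_trmxC _ e) mulmxA dotmx_mulmxl dnorm_ge0.
Qed.

Lemma embed_selfadjoint a k b N (X : 'M[C]_(d ^ k)) : (a + k + b = N)%N ->
  selfadjoint X -> selfadjoint (embed a k b N X).
Proof. by move=> e sX; rewrite /selfadjoint -(embed_trmxC _ e) sX. Qed.

Lemma embed_kermx a k b N (X : 'M[C]_(d ^ k)) (v : 'rV_(d ^ N)) :
  (a + k + b = N)%N -> selfadjoint X ->
  v *m embed a k b N X = 0 <-> v *m embed a k b N (proj_ortho (kermx X)) = v.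
Proof.
move=> e sX; have [Z XZ] := proj_kermx_compl sX; split => [vX|<-]; last first.
  by rewrite -mulmxA -(embedM _ _ e) mulmx_proj_kermx embed0 mulmx0.
apply/eqP; rewrite eq_sym -subr_eq0 -[X in X - _]mulmx1 -mulmxBr.
by rewrite -(embed1 _ _ e) -(embedB _ _ e) XZ (embedM _ _ e) mulmxA vX mul0mx.
Qed.

Definition bond N x := embed x 2 (N - x - 2) N h.

Lemma Ham_psdmx L : psdmx (Ham h L).
Proof. by apply: psdmx_sum => x; apply: embed_psdmx h_psd; have := ltn_ord x; lia. Qed.

Lemma Gproj_selfadjoint L : selfadjoint (Gproj h L).
Proof. exact: proj_ortho_selfadjoint. Qed.

Lemma embed_Gproj_selfadjoint a k b N : (a + k + b = N)%N ->
  selfadjoint (embed a k b N (Gproj h k)).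
Proof. by move=> e; apply: (embed_selfadjoint e); exact: Gproj_selfadjoint. Qed.

Lemma embed_Gproj_idem a k b N : (a + k + b = N)%N ->
  embed a k b N (Gproj h k) *m embed a k b N (Gproj h k) = embed a k b N (Gproj h k).
Proof. by move=> e; rewrite -(embedM _ _ e) proj_ortho_proj. Qed.

Lemma embed_Gproj_fixed a k b N (v : 'rV_(d ^ N)) : (a + k + b = N)%N ->
  v *m embed a k b N (Gproj h k) = v <->
  forall x, (x < k.-1)%N -> v *m bond N (a + x) = 0.
Proof.
move=> e; rewrite -(embed_kermx _ e (psdmx_selfadjoint (Ham_psdmx (L := k)))).
rewrite /Ham (embed_sum _ e) psdmx_sum_ker => [|x]; last first.
  by apply: (embed_psdmx e); apply: embed_psdmx h_psd; have := ltn_ord x; lia.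
have bondE (x : 'I_k.-1) : embed a k b N (embed x 2 (k - x - 2) k h) = bond N (a + x).
  rewrite /bond (embed_embed _ e); last by have := ltn_ord x; lia.
  by rewrite (_ : k - x - 2 + b = N - (a + x) - 2)%N //; have := ltn_ord x; lia.
split=> [vH x xk|vH x]; last by rewrite bondE vH.
by have := vH (Ordinal xk); rewrite bondE.
Qed.

Lemma Gspace_ker_bonds N (v : 'rV_(d ^ N)) :
  (v <= Gspace h N)%MS <-> forall x, (x < N.-1)%N -> v *m bond N x = 0.
Proof.
rewrite /Gspace; split=> [/sub_kermxP vH x xN|vH].
  have /psdmx_sum_ker vH' := vH; have := vH' _ (Ordinal xN).
  by apply; move=> y; apply: embed_psdmx h_psd; have := ltn_ord y; lia.
apply/sub_kermxP; rewrite /Ham mulmx_sumr big1 // => x _; exact: vH (ltn_ord x).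
Qed.

End ChainHamiltonian.

Lemma ger0_complexE (R : rcfType) (z : R[i]) : 0 <= z -> z = ((complex.Re z)%:C)%C.
Proof. by case: z => a b /ger0_Im /= ->. Qed.

Section KOperator.
Variables (R : realType) (d : nat) (h : 'M[R[i]]_(d ^ 2)) (m n : nat).
Local Notation C := R[i].
Hypothesis h_psd : psdmx h.
Local Notation N := (m + n + 1)%N.
Local Notation P := (G_left h m n).
Local Notation Q := (G_right h m n).
Local Notation K := (Kop h m n).
Local Open Scope sesquilinear_scope.

Lemma G_left_selfadjoint : selfadjoint P.
Proof. by apply: embed_Gproj_selfadjoint; lia. Qed.

Lemma G_right_selfadjoint : selfadjoint Q.
Proof. by apply: embed_Gproj_selfadjoint; lia. Qed.

Lemma G_left_idem : P *m P = P.
Proof. by apply: embed_Gproj_idem; lia. Qed.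

Lemma G_right_idem : Q *m Q = Q.
Proof. by apply: embed_Gproj_idem; lia. Qed.

Lemma G_left_fixed (v : 'rV_(d ^ N)) :
  v *m P = v <-> forall x, (x < m)%N -> v *m bond h N x = 0.
Proof. by apply: (embed_Gproj_fixed h_psd); lia. Qed.

Lemma G_right_fixed (v : 'rV_(d ^ N)) :
  v *m Q = v <-> forall x, (x < n)%N -> v *m bond h N (m + x) = 0.
Proof. by apply: (embed_Gproj_fixed h_psd); lia. Qed.

Lemma Gspace_fixed (v : 'rV_(d ^ N)) :
  (v <= Gspace h N)%MS <-> v *m P = v /\ v *m Q = v.
Proof.
rewrite (Gspace_ker_bonds h_psd) G_left_fixed G_right_fixed.
split=> [vH|[vP vQ] x]; first by split=> x x_lt; apply: vH; lia.
have [x_lt_m _|m_le_x x_lt] := ltnP x m; first exact: vP.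
by rewrite -(subnKC m_le_x); apply: vQ; lia.
Qed.

Lemma Kop_selfadjoint : selfadjoint K.
Proof. exact: PQP_selfadjoint G_left_selfadjoint G_right_selfadjoint. Qed.

Lemma Kop_fixed (v : 'rV_(d ^ N)) : v *m K = v <-> (v <= Gspace h N)%MS.
Proof.
rewrite Gspace_fixed.
exact: PQP_fixed G_left_selfadjoint G_right_selfadjoint G_left_idem G_right_idem v.
Qed.

Lemma Kop_eigen_bounds (v : 'rV_(d ^ N)) mu :
  v != 0 -> v *m K = mu *: v -> 0 <= mu <= 1.
Proof.
exact: PQP_eigen_bounds G_left_selfadjoint G_right_selfadjoint G_left_idem G_right_idem v mu.
Qed.

Lemma Kop_eigenspace1 : (eigenspace K 1 == Gspace h N)%MS.
Proof.
have eigen1 (v : 'rV_(d ^ N)) : (v <= eigenspace K 1)%MS = (v <= Gspace h N)%MS.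
  apply/idP/idP => [/eigenspaceP|vG]; first by rewrite scale1r => /(Kop_fixed v).
  by apply/eigenspaceP; rewrite scale1r; apply/(Kop_fixed v).
by apply/andP; split; apply/row_subP => i; [rewrite -eigen1 | rewrite eigen1]; exact: row_sub.
Qed.

Local Notation Q1 := (embed m.+1 n 0 N (Gproj h n)).

Lemma G_right_absorbs : Q *m Q1 = Q.
Proof.
apply/row_matrixP => i; rewrite !row_mul; set u := row i Q.
have /G_right_fixed uQ : u *m Q = u by rewrite -row_mul G_right_idem.
have e : (m.+1 + n + 0 = N)%N by lia.
by apply/(embed_Gproj_fixed h_psd u e) => x x_lt; rewrite addSnnS; apply: uQ; lia.
Qed.

Lemma Kop_range : (K <= tens_sp N (Gspace h m.+1) (Gspace h n))%MS.
Proof.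
pose W := conform_mx (0 : 'M[C]_(d ^ N)) (Gproj h m.+1 *t Gproj h n).
have e : (m.+1 + n = N)%N by lia.
have PQ1 : P *m Q1 = W.
  rewrite /G_left (embed0l _ e) (embed0r _ e) -conform_mxM; try expn_dims.
  by rewrite tensmx_mul mulmx1 mul1mx.
have Q1P : Q1 *m P = W.
  rewrite /G_left (embed0l _ e) (embed0r _ e) -conform_mxM; try expn_dims.
  by rewrite tensmx_mul mulmx1 mul1mx.
have KW : K *m W = K.
  rewrite -PQ1 /Kop !mulmxA -[P *m Q *m P *m P]mulmxA G_left_idem.
  by rewrite -mulmxA PQ1 -Q1P mulmxA -(mulmxA P Q Q1) G_right_absorbs.
rewrite -KW; apply: submx_trans (submxMl _ _) _.
rewrite /tens_sp; apply: conform_submx; try expn_dims.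
by apply: tensmx_submx; rewrite -[Gproj _ _]mul1mx proj_ortho_sub.
Qed.

Lemma G_left_ker_neq0 : (0 < d)%N -> (0 < m)%N -> h != 0 ->
  exists2 v : 'rV_(d ^ N), v != 0 & v *m P = 0.
Proof.
move=> d_gt0 m_gt0 h_neq0.
have P_neq1 : 1%:M - P != 0.
  apply: contraNneq h_neq0 => /eqP; rewrite subr_eq0 => /eqP P1; apply/eqP.
  have e : (0 + 2 + (N - 0 - 2) = N)%N by lia.
  apply: (embed_eq0 d_gt0 e); apply/row_matrixP => i; rewrite row0 rowE.
  by apply: ((G_left_fixed _).1 _ 0%N m_gt0); rewrite -P1 mulmx1.
have [_ /submxP [w ->] v_neq0] := rowV0Pn P_neq1.
exists (w *m (1%:M - P)) => //.
by rewrite -mulmxA mulmxBl mul1mx G_left_idem subrr mulmx0.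
Qed.

Lemma Kop_max_eigenvalue_lt1 : (0 < d)%N -> (0 < m)%N -> h != 0 ->
  exists lam, largest_eig_below1 K lam.
Proof.
move=> d_gt0 m_gt0 h_neq0; apply: selfadjoint_max_eigenvalue_lt Kop_selfadjoint _.
have [v v_neq0 vP] := G_left_ker_neq0 d_gt0 m_gt0 h_neq0.
exists 0; last exact: ltr01.
by apply/eigenvalueP; exists v; rewrite // scale0r /Kop !mulmxA vP !mul0mx.
Qed.

Lemma G_left_fixed_Ham (v : 'rV_(d ^ N)) :
  v *m embed 0 m.+1 n N (Ham h m.+1) = 0 <-> v *m P = v.
Proof. by apply: embed_kermx; [lia | exact/psdmx_selfadjoint/Ham_psdmx]. Qed.

Lemma dotmx_G_right_Kop (psi : 'rV_(d ^ N)) : psi *m P = psi ->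
  dotmx (psi *m Q) psi = dotmx (psi *m K) psi.
Proof.
by move=> psiP; rewrite /Kop !mulmxA (selfadjoint_dotmx _ _ G_left_selfadjoint) psiP.
Qed.

Lemma dotmx_G_right_bounds lam (psi : 'rV_(d ^ N)) : largest_eig_below1 K lam ->
  psi *m P = psi -> (forall phi, (phi <= Gspace h N)%MS -> dotmx psi phi = 0) ->
  0 <= dotmx (psi *m Q) psi <= lam * dotmx psi psi.
Proof.
move=> [_ _ lam_max] psiP psi_ortho; rewrite dotmx_G_right_Kop //.
rewrite {1}(dotmx_PQP G_left_selfadjoint G_right_selfadjoint G_right_idem) dnorm_ge0 /=.
apply: (dotmx_le_eigen Kop_selfadjoint) => r mu r_neq0 rK psi_r.
apply: lam_max; first by apply/eigenvalueP; exists r.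
have /andP [_ mu_le1] := Kop_eigen_bounds r_neq0 rK.
rewrite lt_neqAle mu_le1 andbT; apply: contra_neq psi_r => mu1.
by apply: psi_ortho; apply/Kop_fixed; rewrite rK mu1 scale1r.
Qed.

Lemma largest_eigenvector_normalized lam : largest_eig_below1 K lam -> lam != 0 ->
  exists psi : 'rV_(d ^ N), [/\ psi *m P = psi,
    forall phi, (phi <= Gspace h N)%MS -> dotmx psi phi = 0,
    dotmx psi psi = 1 & dotmx (psi *m Q) psi = lam].
Proof.
move=> [/eigenvalueP [v vK v_neq0] lam_lt1 _] lam_neq0.
have vv_gt0 : 0 < dotmx v v by rewrite dnorm_gt0.
pose c := (sqrtC (dotmx v v))^-1; pose psi := c *: v.
have c_real : c^* = c by apply/conj_Creal/gtr0_real; rewrite invr_gt0 sqrtC_gt0.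
have psiK : psi *m K = lam *: psi by rewrite -scalemxAl vK !scalerA mulrC.
have psiP : psi *m P = psi.
  have psiE : psi = lam^-1 *: (psi *m K) by rewrite psiK scalerA mulVf ?scale1r.
  have KP : K *m P = K by rewrite /Kop -mulmxA G_left_idem.
  by rewrite {1}psiE -scalemxAl -mulmxA KP -psiE.
have psi_norm : dotmx psi psi = 1.
  rewrite linearZl_LR linearZr_LR /= c_real mulrA -expr2 exprVn sqrtCK mulVf //.
  by rewrite lt0r_neq0.
exists psi; split => // [phi /Kop_fixed phiK|]; last first.
  by rewrite dotmx_G_right_Kop // psiK linearZl_LR /= psi_norm mulr1.
have : dotmx psi phi = lam * dotmx psi phi.
  by rewrite -{1}phiK -(selfadjoint_dotmx _ _ Kop_selfadjoint) psiK linearZl_LR.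
move/eqP; rewrite -subr_eq0 -{1}[dotmx psi phi]mul1r -mulrBl mulf_eq0 subr_eq0.
by rewrite eq_sym (lt_eqF lam_lt1) => /eqP.
Qed.

Lemma eps_largest_eigenvalue lam : largest_eig_below1 K lam -> ((eps h m n)%:C)%C = lam.
Proof.
move=> lam_max; have [/eigenvalueP [v vK v_neq0] _ _] := lam_max.
have /andP [lam_ge0 _] := Kop_eigen_bounds v_neq0 vK.
set l := complex.Re lam; have lamE : lam = (l%:C)%C := ger0_complexE lam_ge0.
rewrite lamE; congr (_%:C)%C; rewrite /eps; set S := (X in sup X).
have S_bounds x : S x -> 0 <= x <= l.
  case=> psi [/G_left_fixed_Ham psiP psi_ortho psi_norm psiQ].
  have := dotmx_G_right_bounds lam_max psiP psi_ortho.
  by rewrite -psiQ psi_norm mulr1 lamE ler0c lecR.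
(* for lam = 0 the eigenvector need not lie in the range of P: S is then only
   known to be included in {0}, and may be empty *)
have [l0|l_neq0] := eqVneq l 0.
  rewrite l0; apply: sup_eq0 => x /S_bounds; rewrite l0 => x0.
  by apply/le_anti; rewrite andbC.
apply: sup_max => [x /S_bounds /andP [] //|].
have lam_neq0 : lam != 0 by rewrite lamE; apply: contra_neq l_neq0 => -[].
have [psi [psiP psi_ortho psi_norm psiQ]] := largest_eigenvector_normalized lam_max lam_neq0.
by exists psi; split; rewrite // ?psiQ //; apply/G_left_fixed_Ham.
Qed.

End KOperator.

Lemma frustration_free_dim_gt0 (R : realType) (d : nat) (h : 'M[R[i]]_(d ^ 2)) :
  frustration_free h -> (0 < d)%N.
Proof. by case: d h => // h /(_ 1%N isT); rewrite [Gspace _ _]flatmx0 eqxx. Qed.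

Unset Implicit Arguments.

Theorem lemma3p2 (R : realType) (d : nat) (h : 'M[R[i]]_(d ^ 2)) (m n : nat) :
  positive_op h -> frustration_free h -> (0 < m)%N -> (0 < n)%N ->
  [/\ (Kop h m n <= tens_sp (m + n + 1) (Gspace h m.+1) (Gspace h n))%MS,
      (eigenspace (Kop h m n) 1 == Gspace h (m + n + 1))%MS,
      (forall lam : R[i], largest_eig_below1 (Kop h m n) lam ->
          ((eps h m n)%:C)%C = lam)
    & (h != 0 -> exists lam : R[i], largest_eig_below1 (Kop h m n) lam)].
Proof.
move=> h_psd /frustration_free_dim_gt0 d_gt0 m_gt0 _; split.
- exact: Kop_range.
- exact: Kop_eigenspace1.
- exact: eps_largest_eigenvalue.
- exact: Kop_max_eigenvalue_lt1.
Qed.
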